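(* Let $a_1,\dots,a_{12}$ be positive real numbers that can be partitioned into four triples such that each triple consists of the side lengths of a non-degenerate triangle. Then $a_1,\dots,a_{12}$ can be partitioned into three quadruples such that each quadruple consists of the side lengths of a non-degenerate (planar) quadrilateral.
   Context: Three positive reals are the side lengths of a non-degenerate triangle iff the largest is strictly less than the sum of the other two. Four positive reals are the side lengths of a non-degenerate quadrilateral iff the largest is strictly less than the sum of the other three. *)

From HB Require Import structures.
From mathcomp Require Import all_boot all_order all_algebra.
Set Implicit Arguments. Unset Strict Implicit. Unset Printing Implicit Defensive.
Import Order.TTheory GRing.Theory Num.Theory.
Local Open Scope ring_scope.

Definition polygon_sides (R : realFieldType) (n : nat) (a : 'I_n -> R)
    (S : {set 'I_n}) : Prop :=
  exists2 i, i \in S &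
    (forall j, j \in S -> a j <= a i) /\ a i < \sum_(j in S | j != i) a j.

Definition blocks_of_size (n m k : nat) (p : 'I_n -> 'I_m) : Prop :=
  forall b : 'I_m, #|[set i | p i == b]| = k.

From HB Require Import structures.
From mathcomp Require Import all_boot all_order all_algebra.
Import Order.TTheory GRing.Theory Num.Theory.
Set Implicit Arguments. Unset Strict Implicit. Unset Printing Implicit Defensive.
Local Open Scope ring_scope.

(* Take the triangle T whose longest side is shortest among the four triangles
   and give one side of T to each of the other three triangles.  A positive side
   no longer than the longest side of a triangle keeps that longest side maximal
   and only increases the sum of the others, so each enlarged triangle is a
   quadrilateral. *)

Lemma polygon_sidesU1 (R : realFieldType) (n : nat) (a : 'I_n -> R)
    (S : {set 'I_n}) (w : 'I_n) :
  polygon_sides a S -> w \notin S -> 0 < a w ->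
  (exists2 j, j \in S & a w <= a j) -> polygon_sides a (w |: S).
Proof.
move=> [i iS [i_max i_lt]] wNS a_w_gt0 [j jS a_w_le].
have wi : w != i by apply: contraNneq wNS => ->.
exists i; first by rewrite setU1r.
split=> [k /setU1P [-> | kS] |].
- by apply: le_trans a_w_le _; apply: i_max.
- exact: i_max.
rewrite (bigD1 w) /= ?setU11 ?wi //.
rewrite (eq_bigl (fun k => (k \in S) && (k != i))).
  exact: ltr_wpDl (ltW a_w_gt0) i_lt.
move=> k; rewrite in_setU1.
by case: eqVneq => [->|_]; rewrite ?(negPf wNS) ?andbF ?andbT.
Qed.

Lemma exists_block_of_least_max (R : realFieldType) (n m : nat) (a : 'I_n -> R)
    (B : 'I_m.+1 -> {set 'I_n}) :
  (forall b, polygon_sides a (B b)) ->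
  exists b0, forall b w, w \in B b0 -> exists2 j, j \in B b & a w <= a j.
Proof.
move=> Bpoly.
have /fin_all_exists2 [top topB top_max] : forall b, exists2 t, t \in B b &
    forall j, j \in B b -> a j <= a t.
  by move=> b; have [t tB [t_max _]] := Bpoly b; exists t.
have [b0 _ b0_min] := @arg_minP _ _ _ ord0 xpredT (a \o top) isT.
exists b0 => b w wB0; exists (top b) => //.
exact: le_trans (top_max b0 w wB0) (b0_min b isT).
Qed.

Lemma dissolve_block (n m : nat) (p : 'I_n -> 'I_m.+2) (b0 : 'I_m.+2) :
  #|[set i | p i == b0]| = m.+1 ->
  exists q : 'I_n -> 'I_m.+1, exists2 w : 'I_m.+1 -> 'I_n,
    (forall c, p (w c) = b0) &
    forall c, [set i | q i == c] = w c |: [set i | p i == lift b0 c].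
Proof.
set S := [set i | p i == b0] => cardS.
have [x0 x0S] : {x0 | x0 \in S}.
  by apply/sigW/card_gt0P; rewrite cardS.
pose w c := enum_val (cast_ord (esym cardS) c).
pose q i := if unlift b0 (p i) is Some c then c
            else cast_ord cardS (enum_rank_in x0S i).
have wS c : w c \in S by apply: enum_valP.
exists q, w => c; first by apply/eqP; have := wS c; rewrite inE.
apply/setP => i; rewrite !inE /q.
case: (unliftP b0 (p i)) => [c' p_i | p_i].
  have -> : (i == w c) = false.
    by apply: contraTF (wS c) => /eqP <-; rewrite inE p_i eq_sym neq_lift.
  by rewrite p_i (inj_eq lift_inj).
have iS : i \in S by rewrite inE p_i.
rewrite p_i (negPf (neq_lift _ _)) orbF.
apply/eqP/eqP => [<- | ->]; last by rewrite /w enum_valK_in cast_ordKV.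
by rewrite /w cast_ordK enum_rankK_in.
Qed.

Theorem mainTheorem1 (R : realFieldType) (a : 'I_12 -> R)
  (hpos : forall i, 0 < a i)
  (htri : exists p : 'I_12 -> 'I_4, blocks_of_size 3 p /\
            forall b : 'I_4, polygon_sides a [set i | p i == b]) :
  exists q : 'I_12 -> 'I_3, blocks_of_size 4 q /\
    forall b : 'I_3, polygon_sides a [set i | q i == b].
Proof.
case: htri => p [p_card p_poly].
have [b0 b0_least] := exists_block_of_least_max p_poly.
have [q [w p_w q_block]] := dissolve_block (p_card b0).
have wN c : w c \notin [set i | p i == lift b0 c] by rewrite inE p_w neq_lift.
exists q; split => c; rewrite q_block.
  by rewrite cardsU1 wN p_card.
apply: polygon_sidesU1 => //; apply: b0_least.
by rewrite inE p_w.
Qed.
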